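(* Let $X$ be a set and let $w$ be a word on $X^{\pm1}$ with two decompositions $$w\equiv a_1w_1^{m_1}b_1\equiv a_2w_2^{m_2}b_2,$$ where $m_i\ge2$ and $w_i,a_i,b_i$ are words for $i=1,2$. Suppose that $w_1,w_2$ are primitive and that there are non-negative real constants $A,B$ such that $|a_i|\le A$, $|b_i|\le B$ and $|w|-(A+B)\ge 2|w_i|$ for $i=1,2$. Then $w_1$ and $w_2$ are cyclically conjugate words. Furthermore, regarding words as elements of the free group on $X$, $a_1w_1a_1^{-1}=a_2w_2a_2^{-1}$ and $b_1^{-1}w_1b_1=b_2^{-1}w_2b_2$.
   Context: Words are finite sequences of letters from $X^{\pm1}$; $\equiv$ is letterwise equality; $|w|$ is the number of letters of $w$. A nonempty word is primitive if it is not $u^k$ (as a word) for any word $u$ and $k\ge2$. A cyclic conjugate of a word $w\equiv u_1u_2$ is the word $u_2u_1$. *)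

From HB Require Import structures.
From mathcomp Require Import all_boot all_order all_algebra.
Set Implicit Arguments. Unset Strict Implicit. Unset Printing Implicit Defensive.

(* Letters of X^{+-1}: a pair (x, e) with e = true meaning x^{+1}
   and e = false meaning x^{-1}.  Words are finite sequences of letters;
   letterwise equality is Leibniz equality of sequences. *)
Definition letter (X : Type) := (X * bool)%type.
Definition word (X : Type) := seq (letter X).

Definition linv (X : Type) (l : letter X) : letter X := (l.1, ~~ l.2).

Definition winv (X : Type) (w : word X) : word X := rev (map (@linv X) w).

Definition wpow (X : Type) (u : word X) (k : nat) : word X := flatten (nseq k u).

Definition primitive (X : Type) (w : word X) : Prop :=
  w <> [::] /\ ~ (exists (u : word X) (k : nat), 2 <= k /\ w = wpow u k).

Definition cyclic_conj (X : Type) (w v : word X) : Prop :=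
  exists u1 u2 : word X, w = u1 ++ u2 /\ v = u2 ++ u1.

(* Equality of the images in the free group F(X): the equivalence relation
   generated by inserting/deleting a cancelling pair l l^{-1}. *)
Inductive free_eq (X : Type) : word X -> word X -> Prop :=
  | free_eq_refl w : free_eq w w
  | free_eq_cancel p q l : free_eq (p ++ [:: l; linv l] ++ q) (p ++ q)
  | free_eq_sym u v : free_eq u v -> free_eq v u
  | free_eq_trans u v t : free_eq u v -> free_eq v t -> free_eq u t.

(* Both powers cover a common window of w of length at least |w1| + |w2|,
   in which w is periodic with periods |w1| and |w2|.  By the Fine-Wilf
   theorem gcd(|w1|, |w2|) is then a period of both words; primitivity forces
   |w1| = gcd = |w2|, so w1 is the rotation of w2 by the offset
   |a1| - |a2| mod |w2|.  Writing that offset as k|w2| + r exhibits a1 as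
   a2 w2^k t with t the prefix of length r of w2; conjugating w1 = rot r w2
   back by t and by w2^k (which commutes with w2) gives
   a1 w1 a1^-1 = a2 w2 a2^-1.  The identity for the b_i is the same argument
   applied to w^-1 = b_i^-1 (w_i^-1)^m_i a_i^-1. *)

From HB Require Import structures.
From mathcomp Require Import all_boot all_order all_algebra.
From mathcomp Require Import zify lra.
Import Order.TTheory GRing.Theory Num.Theory.

Set Implicit Arguments.
Unset Strict Implicit.
Unset Printing Implicit Defensive.

Section Periodic.
Variable T : Type.
Implicit Types (h : nat -> T) (p q : nat).

Definition periodic h p := forall i, h (i + p) = h i.

Lemma periodicM k h p : periodic h p -> periodic h (k * p).
Proof.
move=> hp i; elim: k => [|k IHk]; first by rewrite addn0.
by rewrite mulSn addnA addnAC hp.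
Qed.

Lemma periodic_mod h p : periodic h p -> forall i, h i = h (i %% p).
Proof. by move=> hp i; rewrite {1}(divn_eq i p) addnC periodicM. Qed.

Lemma periodic_gcd h p q :
  0 < p -> periodic h p -> periodic h q -> periodic h (gcdn p q).
Proof.
move=> p_gt0 hp hq i; have [a _ /dvdnP[k def_k]] := Bezoutl q p_gt0.
by rewrite -(periodicM a hq) -addnA def_k periodicM.
Qed.

Lemma periodic_unshift h q s g :
  0 < q -> periodic h q -> periodic (fun i => h (s + i)) g -> periodic h g.
Proof.
move=> q_gt0 hq hsg i.
have shift j : h j = h (s + (j + s * q.-1)).
  by rewrite -(periodicM s hq); congr h; rewrite -[q in s * q](prednK q_gt0); lia.
by rewrite shift (shift i) addnAC hsg.
Qed.

Theorem fine_wilf h1 h2 p q : 0 < p -> 0 < q ->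
  periodic h1 p -> periodic h2 q -> (forall i, i < p + q -> h1 i = h2 i) ->
  h1 =1 h2 /\ periodic h1 (gcdn p q).
Proof.
move=> p_gt0 q_gt0 h1p h2q eq12.
have h1q : periodic h1 q.
  move=> i; have ip_lt : i %% p < p by rewrite ltn_pmod.
  rewrite (periodic_mod h1p i) (periodic_mod h1p (i + q)) -modnDml.
  rewrite -(periodic_mod h1p) eq12 ?ltn_add2r // h2q -eq12 //.
  by rewrite (leq_trans ip_lt) ?leq_addr.
split; last exact: periodic_gcd.
move=> i; rewrite (periodic_mod h1q) (periodic_mod h2q) eq12 //.
by rewrite (leq_trans (ltn_pmod i q_gt0)) ?leq_addl.
Qed.

End Periodic.

Section Words.
Variable X : Type.
Implicit Types (a b u v w : word X).

Lemma winv_cat u v : winv (u ++ v) = winv v ++ winv u.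
Proof. by rewrite /winv map_cat rev_cat. Qed.

Lemma winvK : involutive (@winv X).
Proof.
move=> u; rewrite /winv map_rev revK -map_comp -[RHS]map_id.
by apply: eq_map => -[x e]; rewrite /linv /= negbK.
Qed.

Lemma size_winv u : size (winv u) = size u.
Proof. by rewrite /winv size_rev size_map. Qed.

Lemma wpowD u m n : wpow u (m + n) = wpow u m ++ wpow u n.
Proof. by rewrite /wpow nseqD flatten_cat. Qed.

Lemma wpowSr u m : wpow u m.+1 = wpow u m ++ u.
Proof. by rewrite -addn1 wpowD /wpow /= cats0. Qed.

Lemma size_wpow u m : size (wpow u m) = m * size u.
Proof. by elim: m => //= m IHm; rewrite size_cat IHm mulSn. Qed.

Lemma winv_wpow u m : winv (wpow u m) = wpow (winv u) m.
Proof. by elim: m => //= m IHm; rewrite winv_cat IHm -wpowSr. Qed.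

Lemma winv_cat_wpow a u b m :
  winv (a ++ wpow u m ++ b) = winv b ++ wpow (winv u) m ++ winv a.
Proof. by rewrite !winv_cat winv_wpow catA. Qed.

Lemma primitive_size_gt0 u : primitive u -> 0 < size u.
Proof. by case: u => [[]|]. Qed.

Lemma primitive_winv u : primitive u -> primitive (winv u).
Proof.
case=> u_neq0 u_prim; split=> [u'0 | [v [k [k_ge2 def_u']]]].
  by apply: u_neq0; rewrite -[u]winvK u'0.
by apply: u_prim; exists (winv v), k; rewrite -winv_wpow -def_u' winvK.
Qed.

Lemma cyclic_conj_sym u v : cyclic_conj u v -> cyclic_conj v u.
Proof. by case=> u1 [u2 [-> ->]]; exists u2, u1. Qed.

Lemma cyclic_conj_rot r u : cyclic_conj (rot r u) u.
Proof. by exists (drop r u), (take r u); rewrite cat_take_drop. Qed.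

Lemma take_wpow u m k r : k < m -> r <= size u ->
  take (k * size u + r) (wpow u m) = wpow u k ++ take r u.
Proof.
move=> lt_km le_ru; rewrite -(subnKC lt_km) wpowD wpowSr -catA.
by rewrite take_cat size_wpow ltnNge leq_addr /= addKn takel_cat.
Qed.

(* The letters of the infinite word u u u ...; x0 only matters when u = [::]. *)
Definition cyc_nth x0 u i := nth x0 u (i %% size u).

Lemma periodic_cyc_nth x0 u : periodic (cyc_nth x0 u) (size u).
Proof. by move=> i; rewrite /cyc_nth modnDr. Qed.

Lemma cyc_nth_small x0 u i : i < size u -> cyc_nth x0 u i = nth x0 u i.
Proof. by move=> lt_iu; rewrite /cyc_nth modn_small. Qed.

Lemma nth_wpow x0 u m i : i < m * size u -> nth x0 (wpow u m) i = cyc_nth x0 u i.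
Proof.
elim: m i => [|m IHm] i; first by rewrite mul0n.
rewrite /= nth_cat mulSn => lt_i; case: ltnP => [lt_iu | le_ui].
  by rewrite cyc_nth_small.
rewrite IHm ?ltn_subLR //.
by rewrite -[in RHS](subnK le_ui) periodic_cyc_nth.
Qed.

Lemma nth_cat_wpow x0 w a u b m i : w = a ++ wpow u m ++ b ->
  i < m * size u -> nth x0 w (size a + i) = cyc_nth x0 u i.
Proof.
move=> -> lt_i; rewrite nth_cat ltnNge leq_addr /= addKn nth_cat size_wpow lt_i.
exact: nth_wpow.
Qed.

Lemma cyc_nth_rot x0 r u i : r <= size u ->
  cyc_nth x0 (rot r u) i = cyc_nth x0 u (r + i).
Proof.
move=> le_ru; case: (posnP (size u)) => [u0 | u_gt0].
  by move/eqP: u0 le_ru => /nilP-> /[!leqn0]/eqP->.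
rewrite /cyc_nth size_rot -modnDmr; have := ltn_pmod i u_gt0.
move: (i %% size u) => j lt_ju; rewrite /rot nth_cat size_drop nth_drop.
case: ltnP => [lt_j | le_j]; first by rewrite modn_small // -ltn_subRL.
rewrite nth_take; last by rewrite ltn_subLR // subnK.
have -> : r + j = j - (size u - r) + size u by lia.
by rewrite modnDr modn_small //; lia.
Qed.

Lemma rot_of_cyc_nth_shift x0 u v s : 0 < size u -> size v = size u ->
  (forall i, cyc_nth x0 v i = cyc_nth x0 u (s + i)) -> v = rot (s %% size u) u.
Proof.
move=> u_gt0 size_vu eq_vu; apply: (eq_from_nth (x0 := x0)) => [|i lt_iv].
  by rewrite size_rot.
rewrite -cyc_nth_small // eq_vu -cyc_nth_small; last by rewrite size_rot -size_vu.
rewrite cyc_nth_rot; last exact: ltnW (ltn_pmod _ u_gt0).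
by rewrite /cyc_nth modnDml.
Qed.

Lemma primitive_period x0 u g : primitive u -> 0 < g -> g %| size u ->
  periodic (cyc_nth x0 u) g -> g = size u.
Proof.
move=> u_prim g_gt0 g_dvd u_g; have u_gt0 := primitive_size_gt0 u_prim.
have le_gu := dvdn_leq u_gt0 g_dvd.
apply/eqP; rewrite eqn_leq le_gu leqNgt; apply/negP => lt_gu.
case: u_prim => _; apply.
exists (take g u), (size u %/ g); split; first by rewrite ltn_divRL // mul1n.
have size_take_g : size (take g u) = g by rewrite size_takel.
apply: (eq_from_nth (x0 := x0)) => [|i lt_iu].
  by rewrite size_wpow size_take_g divnK.
rewrite nth_wpow ?size_take_g ?divnK // -cyc_nth_small // (periodic_mod u_g).
have lt_ig : i %% g < g by rewrite ltn_pmod.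
by rewrite /cyc_nth size_take_g nth_take // modn_small // (leq_trans lt_ig).
Qed.
End Words.

Section FreeGroup.
Variable X : Type.
Implicit Types (a b u v x y : word X).

Definition wconj a u := a ++ u ++ winv a.

Lemma wconj_cat a b u : wconj (a ++ b) u = a ++ wconj b u ++ winv a.
Proof. by rewrite /wconj winv_cat -!catA. Qed.

Lemma winv_wconj a u : winv (wconj a u) = wconj a (winv u).
Proof. by rewrite /wconj !winv_cat winvK catA. Qed.

Lemma free_eq_cat x y u v : free_eq u v -> free_eq (x ++ u ++ y) (x ++ v ++ y).
Proof.
elim=> {u v} [u | p q l | u v _ | u v t _ IHuv _ IHvt].
- exact: free_eq_refl.
- by have := free_eq_cancel (x ++ p) (q ++ y) l; rewrite -!catA.
- exact: free_eq_sym.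
- exact: free_eq_trans IHuv IHvt.
Qed.

Lemma free_eq_winv u v : free_eq u v -> free_eq (winv u) (winv v).
Proof.
elim=> {u v} [u | p q l | u v _ | u v t _ IHuv _ IHvt].
- exact: free_eq_refl.
- rewrite !winv_cat (_ : winv [:: l; linv l] = [:: l; linv l]).
    by rewrite -catA; apply: free_eq_cancel.
  by case: l => x e; rewrite /winv /linv /= negbK.
- exact: free_eq_sym.
- exact: free_eq_trans IHuv IHvt.
Qed.

Lemma free_eq_mulV x y z : free_eq (x ++ y ++ winv y ++ z) (x ++ z).
Proof.
elim/last_ind: y z => [|y l IHy] z; first exact: free_eq_refl.
have -> : winv (rcons y l) = linv l :: winv y.
  by rewrite -cats1 winv_cat.
rewrite -cats1 -!catA /=; apply: free_eq_trans (IHy z).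
by have := free_eq_cancel (x ++ y) (winv y ++ z) l; rewrite -!catA.
Qed.

Lemma free_eq_wconj_rot r u : free_eq (wconj (take r u) (rot r u)) u.
Proof.
rewrite /wconj /rot -[X in free_eq _ X](cat_take_drop r u) -!catA.
have := free_eq_mulV (take r u ++ drop r u) (take r u) [::].
by rewrite !cats0 -!catA.
Qed.

Lemma free_eq_wconj_wpow k u : free_eq (wconj (wpow u k) u) u.
Proof.
rewrite /wconj catA -wpowSr (_ : wpow u k.+1 = u ++ wpow u k) // -catA.
by have := free_eq_mulV u (wpow u k) [::]; rewrite !cats0.
Qed.

Lemma free_eq_wconj_shift a u k r :
  free_eq (wconj (a ++ wpow u k ++ take r u) (rot r u)) (wconj a u).
Proof.
rewrite !wconj_cat.
apply: free_eq_trans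
  (free_eq_cat _ _ (free_eq_cat _ _ (free_eq_wconj_rot r u))) _.
exact: free_eq_cat (free_eq_wconj_wpow k u).
Qed.
End FreeGroup.

Section OverlappingPowers.
Variables (X : Type) (w a1 w1 b1 a2 w2 b2 : word X) (m1 m2 : nat).
Hypothesis def1 : w = a1 ++ wpow w1 m1 ++ b1.
Hypothesis def2 : w = a2 ++ wpow w2 m2 ++ b2.
Hypotheses (prim1 : primitive w1) (prim2 : primitive w2).
Hypothesis overlap : maxn (size a1) (size a2) + maxn (size b1) (size b2)
  + (size w1 + size w2) <= size w.
Hypothesis le_a21 : size a2 <= size a1.

Let o := size a1 - size a2.

Let size_w1 : size w = size a1 + m1 * size w1 + size b1.
Proof. by rewrite def1 !size_cat size_wpow addnA. Qed.

Let size_w2 : size w = size a2 + m2 * size w2 + size b2.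
Proof. by rewrite def2 !size_cat size_wpow addnA. Qed.

Lemma overlapping_powers_rot : w1 = rot (o %% size w2) w2.
Proof.
have w1_gt0 := primitive_size_gt0 prim1; have w2_gt0 := primitive_size_gt0 prim2.
have [x0 _] : exists x0 : letter X, True by case: (w1) w1_gt0 => // x0; exists x0.
have align i : i < size w1 + size w2 -> cyc_nth x0 w1 i = cyc_nth x0 w2 (o + i).
  move=> lt_i; rewrite -(nth_cat_wpow x0 def1) -?(nth_cat_wpow x0 def2).
  - by congr nth; rewrite /o; lia.
  - by rewrite /o; lia.
  - by lia.
have w2o_per : periodic (fun i => cyc_nth x0 w2 (o + i)) (size w2).
  by move=> i; rewrite addnA periodic_cyc_nth.
have [eq12 w1_gcd] :=
  fine_wilf w1_gt0 w2_gt0 (periodic_cyc_nth x0 w1) w2o_per align.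
have gcd_gt0 : 0 < gcdn (size w1) (size w2) by rewrite gcdn_gt0 w1_gt0.
have gcd_w1 := primitive_period prim1 gcd_gt0 (dvdn_gcdl _ _) w1_gcd.
have w2_gcd : periodic (cyc_nth x0 w2) (gcdn (size w1) (size w2)).
  apply: (periodic_unshift (s := o) w2_gt0 (periodic_cyc_nth x0 w2)) => i.
  by rewrite -!eq12 w1_gcd.
have gcd_w2 := primitive_period prim2 gcd_gt0 (dvdn_gcdr _ _) w2_gcd.
by apply: rot_of_cyc_nth_shift w2_gt0 _ eq12; rewrite -{1}gcd_w1.
Qed.

Lemma overlapping_powers_prefix :
  a1 = a2 ++ wpow w2 (o %/ size w2) ++ take (o %% size w2) w2.
Proof.
have w2_gt0 := primitive_size_gt0 prim2.
have -> : a1 = take (size a1) w by rewrite def1 take_size_cat.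
rewrite def2 -(subnKC le_a21) take_cat ltnNge leq_addr /= addKn -/o.
rewrite takel_cat ?size_wpow; last by rewrite /o; lia.
have le_r : o %% size w2 <= size w2 by exact: ltnW (ltn_pmod _ w2_gt0).
rewrite {1}(divn_eq o (size w2)) take_wpow //.
by rewrite ltn_divLR //; rewrite /o; lia.
Qed.

Lemma overlapping_powers_conj_le :
  cyclic_conj w1 w2 /\ free_eq (wconj a1 w1) (wconj a2 w2).
Proof.
rewrite overlapping_powers_prefix overlapping_powers_rot; split.
  exact: cyclic_conj_rot.
exact: free_eq_wconj_shift.
Qed.

End OverlappingPowers.

Lemma overlapping_powers_conj (X : Type) (w a1 w1 b1 a2 w2 b2 : word X) m1 m2 :
  w = a1 ++ wpow w1 m1 ++ b1 -> w = a2 ++ wpow w2 m2 ++ b2 ->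
  primitive w1 -> primitive w2 ->
  maxn (size a1) (size a2) + maxn (size b1) (size b2) + (size w1 + size w2)
    <= size w ->
  cyclic_conj w1 w2 /\ free_eq (wconj a1 w1) (wconj a2 w2).
Proof.
move=> def1 def2 prim1 prim2 overlap.
have [le_a21 | /ltnW le_a12] := leqP (size a2) (size a1).
  exact: overlapping_powers_conj_le def1 def2 prim1 prim2 overlap le_a21.
rewrite maxnC (maxnC (size b1)) (addnC (size w1)) in overlap.
have [conj21 free21] :=
  overlapping_powers_conj_le def2 def1 prim2 prim1 overlap le_a12.
by split; [apply: cyclic_conj_sym | apply: free_eq_sym].
Qed.

Local Open Scope ring_scope.

Lemma natr_maxn_le (R : numDomainType) (m n : nat) (C : R) :
  m%:R <= C -> n%:R <= C -> (maxn m n)%:R <= C.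
Proof. by case: leqP. Qed.

Theorem proposition3p3 (X : Type) (R : realFieldType) (A B : R)
    (w a1 w1 b1 a2 w2 b2 : word X) (m1 m2 : nat) :
  (2 <= m1)%N -> (2 <= m2)%N ->
  w = a1 ++ wpow w1 m1 ++ b1 ->
  w = a2 ++ wpow w2 m2 ++ b2 ->
  primitive w1 -> primitive w2 ->
  0 <= A -> 0 <= B ->
  (size a1)%:R <= A -> (size a2)%:R <= A ->
  (size b1)%:R <= B -> (size b2)%:R <= B ->
  (size w)%:R - (A + B) >= 2 * (size w1)%:R ->
  (size w)%:R - (A + B) >= 2 * (size w2)%:R ->
  [/\ cyclic_conj w1 w2,
      free_eq (a1 ++ w1 ++ winv a1) (a2 ++ w2 ++ winv a2)
    & free_eq (winv b1 ++ w1 ++ b1) (winv b2 ++ w2 ++ b2)].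
Proof.
move=> _ _ def1 def2 prim1 prim2 _ _ a1A a2A b1B b2B w1_short w2_short.
have overlap : (maxn (size a1) (size a2) + maxn (size b1) (size b2)
    + (size w1 + size w2) <= size w)%N.
  rewrite -(ler_nat R) !natrD.
  have := natr_maxn_le a1A a2A; have := natr_maxn_le b1B b2B; lra.
have [conj12 free_a] := overlapping_powers_conj def1 def2 prim1 prim2 overlap.
have inv_def u a b m : w = a ++ wpow u m ++ b ->
    winv w = winv b ++ wpow (winv u) m ++ winv a.
  by move=> ->; rewrite winv_cat_wpow.
have overlap_inv : (maxn (size (winv b1)) (size (winv b2))
    + maxn (size (winv a1)) (size (winv a2))
    + (size (winv w1) + size (winv w2)) <= size (winv w))%N.
  by rewrite !size_winv (addnC (maxn (size b1) _)).
have [_ free_b] := overlapping_powers_conj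
  (inv_def _ _ _ _ def1) (inv_def _ _ _ _ def2)
  (primitive_winv prim1) (primitive_winv prim2) overlap_inv.
split=> //; move/free_eq_winv: free_b.
by rewrite !winv_wconj /wconj !winvK.
Qed.
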